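(* Let $X$ be a real linear space, $T$ an infinite index set, and $f, f_t : X \to \overline{\mathbb{R}} := \mathbb{R}\cup\{\pm\infty\}$ ($t \in T$) convex proper functions. Let $M := \bigcap_{t\in T} \operatorname{dom} f_t$. Let $v:\mathbb{R}^T\to\overline{\mathbb{R}}$ be $v(y) := \inf\{f(x) : f_t(x)\le y_t \text{ for all } t\in T\}$, where $\mathbb{R}^T$ carries the product topology, and let $\overline{v}$ be the lower semicontinuous hull of $v$, so that $\overline{v}(0_Y) = \sup_{V} \inf_{y\in V} v(y)$, the supremum being over all neighborhoods $V$ of the origin $0_Y$ of $\mathbb{R}^T$. Then $$\overline{v}(0_Y)=\sup_{\varepsilon>0,\ H\in\mathcal{F}(T)}\ \inf_{x\in M}\{f(x): f_t(x)\le\varepsilon \text{ for all } t\in H\}.$$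
   Context: $\operatorname{dom} g := \{x : g(x)<+\infty\}$; a proper function never takes the value $-\infty$ and has nonempty domain. $\mathcal{F}(T)$ is the family of nonempty finite subsets of $T$. Convention: $\inf\emptyset=+\infty$. *)

From HB Require Import structures.
From mathcomp Require Import all_boot all_order all_algebra.
From mathcomp Require Import all_classical all_reals all_analysis.
Set Implicit Arguments. Unset Strict Implicit. Unset Printing Implicit Defensive.
Import Order.TTheory GRing.Theory Num.Theory.
Local Open Scope classical_set_scope.
Local Open Scope ring_scope.

Definition edom (R : realType) (X : Type) (g : X -> \bar R) : set X :=
  [set x | (g x < +oo)%E].

Definition proper_fun (R : realType) (X : Type) (g : X -> \bar R) : Prop :=
  (forall x, g x != -oo%E) /\ (edom g !=set0).

(* convexity of an extended-real-valued function that never takes -oo: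
   the usual inequality, required on the domain (equivalently convex epigraph) *)
Definition econvex (R : realType) (X : lmodType R) (g : X -> \bar R) : Prop :=
  forall (x y : X) (l : R), 0 <= l <= 1 ->
    (g (l *: x + (1 - l) *: y)%R <= (l%:E * g x + (1 - l)%:E * g y)%E)%E.

Definition valfun (R : realType) (X : Type) (T : Type)
  (f : X -> \bar R) (ft : T -> X -> \bar R) (y : T -> R) : \bar R :=
  ereal_inf [set f x | x in [set x | forall t, (ft t x <= (y t)%:E)%E]].

From HB Require Import structures.
From mathcomp Require Import all_boot all_order all_algebra.
From mathcomp Require Import all_classical all_reals all_analysis.
Import Order.TTheory GRing.Theory Num.Theory.
Local Open Scope classical_set_scope.
Local Open Scope ring_scope.

(* In the product topology the boxes [{y : |y t| < e for t in H}], with [e > 0]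
   and [H] finite, form a neighbourhood base of the origin.  If [y] lies in such
   a box, every [x] feasible for [v y] lies in [M] and satisfies [f_t x < e] on
   [H].  Conversely an [x] of [M] with [f_t x <= e/2] on [H] is feasible for the
   point of the box equal to [e/2] on [H] and to [f_t x] (finite, as [f_t] is
   proper) elsewhere.  So every infimum on either side dominates one on the
   other. *)

Section pointwise_convergence.
Context {T : Type} {V : topologicalType}.

Lemma ptws_cvgP (F : set_system {ptws T -> V}) (g : {ptws T -> V}) : Filter F ->
  F --> g <-> forall t, (fun h : {ptws T -> V} => h t) @ F --> g t.
Proof.
move=> FF; rewrite cvg_sup.
have evalT t : [set h t | h in [set: {ptws T -> V}]] = [set: V].
  by apply/seteqP; split=> // v _; exists (fun=> v).
split=> Fg t; move: (Fg t); rewrite cvg_image // => {}Fg.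
  move=> W /Fg [A FA <-]; rewrite ?nbhs_simpl /fmap /=.
  by apply: filterS FA => h Ah; exists h.
move=> W /Fg FW; exists ((fun h : {ptws T -> V} => h t) @^-1` W) => //.
by apply/seteqP; split=> [_ [h Wh <-] //| v Wv]; exists (fun=> v).
Qed.

End pointwise_convergence.

Section ptws_box.
Context {R : realType} {T : Type}.
Notation Y := {ptws T -> R^o}.

Definition ptws_box (e : R) (H : set T) : set Y :=
  [set y | forall t, H t -> `|y t| < e].

Lemma ptws_box_nbhs0 (e : R) (H : set T) : 0 < e -> finite_set H ->
  nbhs ((fun=> 0) : Y) (ptws_box e H).
Proof.
move=> e_gt0 /(@finite_fsetP {classic T}) [D ->].
have coord_nbhs t : nbhs ((fun=> 0) : Y) [set y : Y | `|y t| < e].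
  have ball_nbhs : nbhs (0 : R^o) [set r : R^o | `|r| < e].
    by exists e => //= r; rewrite /ball /= sub0r normrN.
  have /ptws_cvgP : nbhs ((fun=> 0) : Y) --> ((fun=> 0) : Y) by exact: cvg_id.
  by move=> /(_ t _ ball_nbhs).
have := filter_bigI (D := D) (nbhs_filter ((fun=> 0) : Y))
  (fun t _ => coord_nbhs t).
by apply: filterS => y Dy t Dt; exact: Dy.
Qed.

Definition box_index := [set eH : R * set T |
  0 < eH.1 /\ finite_set eH.2 /\ eH.2 !=set0].

Lemma ptws_box_filter (t0 : T) :
  Filter (filter_from box_index (fun eH => ptws_box eH.1 eH.2)).
Proof.
apply: filter_from_filter.
  by exists (1, [set t0]); split=> //; split; [exact: finite_set1 | exists t0].
move=> [e1 H1] [e2 H2] [/= e1_gt0 [fH1 [t1 H1t1]]] [/= e2_gt0 [fH2 _]].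
exists (Num.min e1 e2, H1 `|` H2).
  split; first by rewrite /= lt_min e1_gt0 e2_gt0.
  by split; [rewrite /= finite_setU | exists t1; left].
move=> y /= boxy; split=> t Ht; apply: lt_le_trans (boxy t _) _.
- by left.
- by rewrite ge_min lexx.
- by right.
- by rewrite ge_min lexx orbT.
Qed.

Lemma ptws_box_filter_cvg0 (t0 : T) :
  filter_from box_index (fun eH => ptws_box eH.1 eH.2) --> ((fun=> 0) : Y).
Proof.
apply/(ptws_cvgP _ _ (ptws_box_filter t0)) => t W.
move=> /nbhs_ballP [e /= e_gt0 eW].
exists (e, [set t]); first by split=> //; split; [exact: finite_set1 | exists t].
move=> y /= boxy; apply: eW; rewrite /ball /= sub0r normrN.
exact: boxy.
Qed.

Lemma nbhs0_ptws_box (t0 : T) {V : set Y} : nbhs ((fun=> 0) : Y) V ->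
  exists2 eH, box_index eH & ptws_box eH.1 eH.2 `<=` V.
Proof. by move=> /(ptws_box_filter_cvg0 t0) [eH]; exists eH. Qed.

End ptws_box.

Section value_function.
Context {R : realType} {X T : Type} (f : X -> \bar R) (ft : T -> X -> \bar R).

Definition common_edom : set X := \bigcap_(t in [set: T]) edom (ft t).

Definition relaxed_value (e : R) (H : set T) : \bar R :=
  ereal_inf [set f x | x in
    [set x | common_edom x /\ forall t, H t -> (ft t x <= e%:E)%E]].

Lemma relaxed_value_le_valfun (e : R) (H : set T) (y : {ptws T -> R^o}) :
  ptws_box e H y -> (relaxed_value e H <= valfun f ft y)%E.
Proof.
move=> boxy; apply: le_ereal_inf_tmp => _ [x feas_x <-].
apply: ereal_inf_lbound; exists x => //; split.
  by move=> t _; apply: le_lt_trans (feas_x t) _; rewrite ltry.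
move=> t Ht; apply: le_trans (feas_x t) _; rewrite lee_fin.
exact/ltW/(le_lt_trans (ler_norm _) (boxy t Ht)).
Qed.

Lemma inf_valfun_box_le (e d : R) (H : set T) :
  (forall t x, ft t x != -oo%E) -> `|d| < e ->
  (ereal_inf (valfun f ft @` ptws_box e H) <= relaxed_value d H)%E.
Proof.
move=> ft_neqNy de; apply: le_ereal_inf_tmp => _ [x [dom_x Hx] <-].
pose y : {ptws T -> R^o} := fun t => if `[< H t >] then d else fine (ft t x).
have boxy : ptws_box e H y by move=> t Ht; rewrite /y asboolT.
apply: (@le_trans _ _ (valfun f ft y)).
  by apply: ereal_inf_lbound; exists y.
apply: ereal_inf_lbound; exists x => // t; rewrite /y.
case: asboolP => [|_]; first exact: Hx.
have ft_lty : (ft t x < +oo)%E := dom_x t I.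
by move: ft_lty (ft_neqNy t x); case: (ft t x).
Qed.

End value_function.

Theorem lemma2p1 (R : realType) (X : lmodType R) (T : Type)
  (f : X -> \bar R) (ft : T -> X -> \bar R) :
  infinite_set [set: T] ->
  econvex f -> proper_fun f ->
  (forall t, econvex (ft t)) -> (forall t, proper_fun (ft t)) ->
  let M := \bigcap_(t in [set: T]) edom (ft t) in
  let v := valfun f ft in
  ereal_sup [set ereal_inf (v @` V) |
              V in [set V : set {ptws T -> R^o} | @nbhs _ {ptws T -> R^o} (fun=> 0) V]]
  = ereal_sup [set ereal_inf [set f x | x in
                  [set x | M x /\ forall t, eH.2 t -> (ft t x <= eH.1%:E)%E]] |
               eH in [set eH : R * set T |
                        0 < eH.1 /\ finite_set eH.2 /\ eH.2 !=set0]].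
Proof.
move=> /infinite_setN0 [t0 _] _ _ _ ft_proper M v.
have ft_neqNy t x : ft t x != -oo%E by exact: (ft_proper t).1.
apply/eqP; rewrite eq_le; apply/andP; split.
- apply: ge_ereal_sup => _ [V nV <-].
  have [[e H] [/= e_gt0 [fH H0]] boxV] := nbhs0_ptws_box t0 nV.
  apply: le_trans (le_ereal_inf (image_subset v boxV)) _.
  apply: le_trans (inf_valfun_box_le f ft e (e / 2) H ft_neqNy _) _.
    by rewrite ger0_norm ?divr_ge0 ?ltW // ltr_pdivrMr // ltr_pMr // ltr1n.
  by apply: ereal_sup_ubound; exists (e / 2, H) => //; rewrite /= divr_gt0.
- apply: ge_ereal_sup => _ [[e H] [/= e_gt0 [fH _]] <-].
  apply: le_trans (ereal_sup_ubound _); last first.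
    by exists (ptws_box e H) => //; exact: ptws_box_nbhs0.
  apply: le_ereal_inf_tmp => _ [y boxy <-].
  exact: relaxed_value_le_valfun.
Qed.
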